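(* Let $(M,d)$ be a compact metric space, $\varphi:M\to M$ continuous, and $\{G_n\}\subset B(M)$ weakly almost additive. Then $\lim_{k\to\infty}\limsup_{n\to\infty}n^{-1}\|G_n-k^{-1}S_nG_k\|_\infty=0$.
   Context: $B(M)$: bounded Borel real functions, $\|f\|_\infty=\sup|f|$; $S_nG=\sum_{k=0}^{n-1}G\circ\varphi^k$. Weakly almost additive: there is a real sequence $\{C_n\}$ with $\lim_nn^{-1}C_n=0$ and $-C_m+G_m+G_n\circ\varphi^m\le G_{m+n}\le C_m+G_m+G_n\circ\varphi^m$ for all $m,n\ge1$. *)

From HB Require Import structures.
From mathcomp Require Import all_boot all_order all_algebra.
From mathcomp Require Import all_classical all_reals all_analysis.
Set Implicit Arguments. Unset Strict Implicit. Unset Printing Implicit Defensive.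
Import Order.TTheory GRing.Theory Num.Theory.
Import numFieldTopology.Exports.
Local Open Scope classical_set_scope.
Local Open Scope ring_scope.

Definition borel_set (T : topologicalType) (A : set T) : Prop :=
  <<s [set U : set T | open U] >> A.

Definition borel_fun (R : realType) (T : topologicalType) (f : T -> R) : Prop :=
  forall U : set R, open U -> borel_set (f @^-1` U).

Definition in_BM (R : realType) (T : topologicalType) (f : T -> R) : Prop :=
  borel_fun f /\ exists c : R, forall x, `|f x| <= c.

Definition supnorm (R : realType) (T : Type) (f : T -> R) : R :=
  sup (range (fun x => `|f x|)).

Definition birkhoff (R : realType) (T : Type) (phi : T -> T) (n : nat)
  (g : T -> R) : T -> R :=
  fun x => \sum_(0 <= k < n) g (iter k phi x).

Definition weakly_almost_additive (R : realType) (T : Type) (phi : T -> T)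
  (G : nat -> T -> R) (C : nat -> R) : Prop :=
  ((fun n : nat => (n%:R)^-1 * C n) @ \oo --> (0 : R)) /\
  forall m n : nat, (1 <= m)%N -> (1 <= n)%N -> forall x : T,
    - C m + G m x + G n (iter m phi x) <= G (m + n)%N x /\
    G (m + n)%N x <= C m + G m x + G n (iter m phi x).

From HB Require Import structures.
From mathcomp Require Import all_boot all_order all_algebra.
From mathcomp Require Import all_classical all_reals all_analysis.
From mathcomp Require Import ring lra zify.
Import Order.TTheory GRing.Theory Num.Theory.
Import numFieldTopology.Exports.
Local Open Scope classical_set_scope.
Local Open Scope ring_scope.

(* Fix k and n >= 2k, and choose q with qk + k <= n < qk + 2k.  For each shift
   j < k, weak almost additivity compares G_n with the sum of G_k over the q
   consecutive blocks of length k starting at j, up to q C_k plus boundary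
   terms depending only on k.  The k shifted block families tile [0, qk)
   exactly once, so summing over j gives
     |k G_n - S_n G_k| <= n |C_k| + D_k,
   whence limsup_n n^-1 ||G_n - k^-1 S_n G_k|| <= |C_k| / k, which tends to 0. *)

Lemma exists_ub_upto {R : realDomainType} (f : nat -> R) (N : nat) :
  exists K, forall j, (j <= N)%N -> f j <= K.
Proof.
elim: N => [|N [K fK]]; first by exists (f 0%N) => j; rewrite leqn0 => /eqP ->.
exists (Num.max K (f N.+1)) => j; rewrite leq_eqVlt => /predU1P [-> | /fK fjK].
- by rewrite le_max lexx orbT.
- by rewrite le_max fjK.
Qed.

Lemma norm_sum_nat_le {R : numDomainType} [F : nat -> R] [B : R] [m n : nat] :
  (forall i, (m <= i < n)%N -> `|F i| <= B) ->
  `|\sum_(m <= i < n) F i| <= (n - m)%:R * B.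
Proof.
move=> FB; apply: le_trans (ler_norm_sum _ _ _) _.
by rewrite mulr_natl -sumr_const_nat; apply: ler_sum_nat.
Qed.

Lemma sum_nat_mul_by_residue {V : nmodType} (F : nat -> V) (q k : nat) :
  \sum_(0 <= l < q * k) F l = \sum_(0 <= j < k) \sum_(0 <= i < q) F (i * k + j)%N.
Proof.
rewrite exchange_big_nat big_nat_mul; apply: eq_bigr => i _.
rewrite -{1}(add0n (i * k)%N) big_addn mulSnr addKn.
by apply: eq_bigr => j _; rewrite addnC.
Qed.

Lemma supnorm_le {R : realType} {T : Type} (f : T -> R) (B : R) :
  0 <= B -> (forall x, `|f x| <= B) -> supnorm f <= B.
Proof.
move=> B0 fB; rewrite /supnorm.
have [->|/set0P ne] := eqVneq (range (fun x => `|f x|)) set0; first by rewrite sup0.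
by apply: ge_sup => // _ [x _ <-].
Qed.

Lemma supnorm_ge0 {R : realType} {T : Type} (f : T -> R) (B : R) :
  (forall x, `|f x| <= B) -> 0 <= supnorm f.
Proof.
move=> fB; rewrite /supnorm.
have [->|/set0P [_ [x _ _]]] := eqVneq (range (fun x => `|f x|)) set0.
  by rewrite sup0.
apply: le_trans (normr_ge0 (f x)) _; apply: ub_le_sup; last by exists x.
by exists B => _ [y _ <-].
Qed.

Lemma limn_esup_le_lim {R : realType} (u v : (\bar R)^nat) (l : \bar R) :
  (\forall n \near \oo, (u n <= v n)%E) -> v @ \oo --> l -> (limn_esup u <= l)%E.
Proof.
move=> [N _ uvN] /cvg_limn_einf_sup [_ <-]; rewrite !limn_esup_lim.
apply: lee_lim; [exact: is_cvg_esups | exact: is_cvg_esups |].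
near=> m; apply: ge_ereal_sup => _ [n /= mn <-].
apply: le_trans (uvN n _) _; last by apply: ereal_sup_ubound; exists n.
by rewrite /= (leq_trans _ mn) //; near: m; exists N.
Unshelve. all: by end_near. Qed.

Definition birkhoff_gap {R : realType} {T : Type} (phi : T -> T)
    (G : nat -> T -> R) (k n : nat) : R :=
  n%:R^-1 * supnorm (fun x => G n x - k%:R^-1 * birkhoff phi n (G k) x).

Section weakly_almost_additive.
Context {R : realType} {T : Type} {phi : T -> T} {G : nat -> T -> R} {C b : nat -> R}.
Hypothesis G_add : forall m n : nat, (1 <= m)%N -> (1 <= n)%N -> forall x : T,
  - C m + G m x + G n (iter m phi x) <= G (m + n)%N x /\
  G (m + n)%N x <= C m + G m x + G n (iter m phi x).
Hypothesis G_bound : forall n x, `|G n x| <= b n.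

Lemma norm_G_add_le m n x : (0 < m)%N -> (0 < n)%N ->
  `|G (m + n)%N x - (G m x + G n (iter m phi x))| <= C m.
Proof.
by move=> m0 n0; have [] := G_add _ _ m0 n0 x => *; apply/ler_normlP; split; lra.
Qed.

Lemma norm_G_drop_le j n x : (0 < n)%N ->
  `|G (j + n)%N x - G n (iter j phi x)| <= `|C j| + b j.
Proof.
move=> n0; case: j => [|j].
  by rewrite subrr normr0 addr_ge0 // (le_trans _ (G_bound 0 x)).
have := norm_G_add_le _ _ x (ltn0Sn j) n0.
have := G_bound j.+1 x; have := ler_norm (C j.+1).
move=> ? /ler_normlP [? ?] /ler_normlP [? ?]; apply/ler_normlP; split; lra.
Qed.

Lemma norm_G_sub_blocks_le k q r x : (0 < k)%N -> (0 < r)%N ->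
  `|G (q * k + r)%N x - \sum_(0 <= i < q) G k (iter (i * k) phi x)|
    <= q%:R * C k + b r.
Proof.
move=> k0 r0; elim: q x => [|q IH] x; first by rewrite big_geq // subr0 mul0r add0r.
rewrite big_nat_recl // mul0n /=.
under eq_bigr do rewrite mulSnr iterD.
rewrite mulSn -addnA.
have qkr0 : (0 < q * k + r)%N by rewrite addn_gt0 r0 orbT.
have /ler_normlP [? ?] := norm_G_add_le _ _ x k0 qkr0.
have /ler_normlP [? ?] := IH (iter k phi x).
by rewrite -natr1; apply/ler_normlP; split; lra.
Qed.

Lemma norm_G_sub_shifted_blocks_le k q j r x : (0 < k)%N -> (0 < r)%N ->
  `|G (j + (q * k + r))%N x - \sum_(0 <= i < q) G k (iter (i * k + j) phi x)|
    <= `|C j| + b j + (q%:R * C k + b r).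
Proof.
move=> k0 r0; have qkr0 : (0 < q * k + r)%N by rewrite addn_gt0 r0 orbT.
apply: le_trans (ler_distD (G (q * k + r)%N (iter j phi x)) _ _) _.
apply: lerD; first exact: norm_G_drop_le.
under eq_bigr do rewrite iterD.
exact: norm_G_sub_blocks_le.
Qed.

Lemma norm_mulG_sub_prefix_le k q n x K : (0 < k)%N ->
  (q * k + k <= n < q * k + 2 * k)%N ->
  (forall j, (j <= 2 * k)%N -> `|C j| + `|b j| <= K) ->
  `|k%:R * G n x - \sum_(0 <= l < q * k) G k (iter l phi x)|
    <= k%:R * (q%:R * `|C k| + 2 * K).
Proof.
move=> k0 /andP [nlo nhi] CbK.
have -> : k%:R * G n x = \sum_(0 <= j < k) G n x.
  by rewrite sumr_const_nat subn0 mulr_natl.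
rewrite sum_nat_mul_by_residue -sumrB.
apply: le_trans (norm_sum_nat_le _) _; last by rewrite subn0.
move=> j /andP [_ jk].
set r := (n - j - q * k)%N.
have /CbK Cbj : (j <= 2 * k)%N by lia.
have /CbK Cbr : (r <= 2 * k)%N by lia.
have -> : n = (j + (q * k + r))%N by lia.
apply: le_trans (norm_G_sub_shifted_blocks_le _ _ _ _ x k0 _) _; first by lia.
have := ler_norm (b j); have := ler_norm (b r); have := normr_ge0 (C r).
have : q%:R * C k <= q%:R * `|C k| by rewrite ler_wpM2l ?ler_norm.
lra.
Qed.

Lemma norm_mulG_sub_birkhoff_le k : (0 < k)%N ->
  exists2 D, 0 <= D & forall n x, (2 * k <= n)%N ->
    `|k%:R * G n x - birkhoff phi n (G k) x| <= n%:R * `|C k| + D.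
Proof.
move=> k0; have [K CbK] := exists_ub_upto (fun j => `|C j| + `|b j|) (2 * k).
have K0 : 0 <= K by apply: le_trans (CbK 0%N isT); rewrite addr_ge0.
exists ((4 * k)%:R * K) => [|n x n2k]; first by rewrite mulr_ge0.
have := leq_divM n k; have := ltn_ceil n k0.
set q := (n %/ k).-1 => n_lt n_ge.
have qk : (q * k + k <= n < q * k + 2 * k)%N by rewrite /q; nia.
have hA := norm_mulG_sub_prefix_le _ _ _ x _ k0 qk CbK.
rewrite /birkhoff (@big_cat_nat _ _ _ (q * k)) //=; last by lia.
set A := \sum_(0 <= l < q * k) _ in hA *; set B := \sum_(q * k <= l < n) _.
have hB : `|B| <= (2 * k)%:R * K.
  apply: le_trans (norm_sum_nat_le (B := K) _) _.
    move=> l _; apply: le_trans (G_bound k _) _; have /CbK : (k <= 2 * k)%N by lia.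
    by have := ler_norm (b k); have := normr_ge0 (C k); lra.
  by rewrite ler_wpM2r // ler_nat; lia.
have qkn : q%:R * k%:R * `|C k| <= n%:R * `|C k|.
  by rewrite ler_wpM2r // -natrM ler_nat; lia.
rewrite opprD addrA; apply: le_trans (ler_normB _ _) _.
move: hA hB qkn; rewrite !natrM; lra.
Qed.

Lemma birkhoff_gap_ge0 k n : 0 <= birkhoff_gap phi G k n.
Proof.
rewrite mulr_ge0 ?invr_ge0 //.
apply: (@supnorm_ge0 _ _ _ (b n + k%:R^-1 * (n%:R * b k))) => x.
apply: le_trans (ler_normB _ _) (lerD (G_bound n x) _).
rewrite normrM ger0_norm ?invr_ge0 // ler_wpM2l ?invr_ge0 //.
by rewrite -[n in n%:R]subn0; apply: norm_sum_nat_le => l _; apply: G_bound.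
Qed.

Lemma limn_esup_birkhoff_gap_le k : (0 < k)%N ->
  (limn_esup (fun n => (birkhoff_gap phi G k n)%:E) <= `|k%:R^-1 * C k|%:E)%E.
Proof.
move=> k0; have [D D0 hD] := norm_mulG_sub_birkhoff_le k k0.
have k_gt0 : 0 < k%:R :> R by rewrite ltr0n.
apply: (@limn_esup_le_lim _ _ (fun n => (`|k%:R^-1 * C k| + D / k%:R * n%:R^-1)%:E)).
  near=> n; rewrite lee_fin.
  have n2k : (2 * k <= n)%N by near: n; exists (2 * k)%N.
  have n_gt0 : 0 < n%:R :> R by rewrite ltr0n; lia.
  have -> : `|k%:R^-1 * C k| + D / k%:R * n%:R^-1
      = n%:R^-1 * (k%:R^-1 * (n%:R * `|C k| + D)).
    by rewrite normrM ger0_norm ?invr_ge0 //; field; rewrite !gt_eqF.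
  rewrite ler_wpM2l ?invr_ge0 //.
  apply: supnorm_le => [|x]; first by rewrite mulr_ge0 ?invr_ge0 ?addr_ge0 ?mulr_ge0.
  have -> : G n x - k%:R^-1 * birkhoff phi n (G k) x
      = k%:R^-1 * (k%:R * G n x - birkhoff phi n (G k) x).
    by field; rewrite gt_eqF.
  by rewrite normrM ger0_norm ?invr_ge0 // ler_wpM2l ?invr_ge0 ?hD.
apply: cvg_EFin; first exact: nearW.
rewrite -[X in _ --> X]addr0; apply: cvgD; first exact: cvg_cst.
rewrite -(mulr0 (D / k%:R)); apply: cvgM; first exact: cvg_cst.
apply/gtr0_cvgV0; first by near=> n; rewrite ltr0n; near: n; exists 1%N.
exact: cvgr_idn.
Unshelve. all: by end_near. Qed.
End weakly_almost_additive.

Theorem lemma6p2 (R : realType) (M : metricType R) (phi : M -> M)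
  (G : nat -> M -> R) :
  compact [set: M] ->
  continuous phi ->
  (forall n, in_BM (G n)) ->
  (exists C : nat -> R, weakly_almost_additive phi G C) ->
  (fun k : nat =>
     limn_esup (fun n : nat =>
       ((n%:R)^-1 *
        supnorm (fun x => G n x - (k%:R)^-1 * birkhoff phi n (G k) x))%:E))
    @ \oo --> (0 : \bar R)%E.
Proof.
move=> _ _ G_BM [C [C_o G_add]].
have [b G_bound] := choice (fun n => (G_BM n).2).
apply: (@squeeze_cvge _ _ _ _ (cst 0%E) _ (fun k => `|k%:R^-1 * C k|%:E)).
- near=> k; have k0 : (0 < k)%N by near: k; exists 1%N.
  apply/andP; split; last exact: (limn_esup_birkhoff_gap_le G_add G_bound).
  apply: limf_esup_ge0 => [|n]; first exact: filter_not_empty.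
  by rewrite lee_fin (birkhoff_gap_ge0 G_bound).
- exact: cvg_cst.
- apply: cvg_EFin; first exact: nearW.
  by have := cvg_norm C_o; rewrite normr0; apply.
Unshelve. all: by end_near. Qed.
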